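(* If $n\ge1$ and $0\le m\le n$, then $\operatorname{diam}(Y_{n,m})=\lfloor n(m+1)/2\rfloor$.
   Context: For integers $n\ge1$, $m\ge0$, the Yoke graph $Y_{n,m}$ is the simple graph whose vertices are the tuples $v=(v_0,\dots,v_{m+1})$ with $v_0,v_{m+1}\in\mathbb{Z}_n$, $v_1,\dots,v_m\in\{0,1\}$, $\sum_{i=0}^{m+1}v_i\equiv0\pmod n$; $u\sim v$ iff there is $0\le i\le m$ with $u_j=v_j$ for $j\notin\{i,i+1\}$ and either ($u_i=v_i+1$, $u_{i+1}=v_{i+1}-1$) or ($u_i=v_i-1$, $u_{i+1}=v_{i+1}+1$), bucket entries (indices $0,m+1$) computed mod $n$. *)

From mathcomp Require Import all_boot.
Set Implicit Arguments. Unset Strict Implicit. Unset Printing Implicit Defensive.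

(* Raw data of a Yoke-graph vertex (v_0, v_1..v_m, v_{m+1}):
   v_0, v_{m+1} in Z_n (as 'I_n), v_1..v_m in {0,1} (as bool). *)
Definition yraw (n m : nat) := ('I_n * {ffun 'I_m -> bool} * 'I_n)%type.

Definition ycoord n m (v : yraw n m) (j : nat) : nat :=
  if j == 0 then nat_of_ord v.1.1
  else if j <= m then
    (if insub (j.-1) is Some k then nat_of_bool (v.1.2 k) else 0)
  else nat_of_ord v.2.

Definition yvalid n m (v : yraw n m) : bool :=
  (\sum_(j < m.+2) ycoord v j) %% n == 0.

Definition yvertex n m := {v : yraw n m | yvalid v}.

Definition is_bucket m (j : nat) := (j == 0) || (j == m.+1).

Definition yinc n m (j : nat) (a b : nat) : bool :=
  if is_bucket m j then a == (b + 1) %% n else a == b + 1.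

Definition yadj n m : rel (yvertex n m) := fun u v =>
  (val u != val v) &&
  [exists i : 'I_m.+1,
     [forall j : 'I_m.+2, (j != i :> nat) && (j != i.+1 :> nat) ==>
        (ycoord (val u) j == ycoord (val v) j)] &&
     ((yinc n m i (ycoord (val u) i) (ycoord (val v) i) &&
       yinc n m i.+1 (ycoord (val v) i.+1) (ycoord (val u) i.+1)) ||
      (yinc n m i (ycoord (val v) i) (ycoord (val u) i) &&
       yinc n m i.+1 (ycoord (val u) i.+1) (ycoord (val v) i.+1)))].

Definition walk_len (T : eqType) (e : rel T) (x y : T) (k : nat) : Prop :=
  exists p : seq T, [/\ size p = k, path e x p & last x p = y].

(* d is the diameter: max over pairs of the graph distance
   (min walk length); in particular the graph is connected. *)
Definition is_diameter (T : eqType) (e : rel T) (d : nat) : Prop :=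
  (forall x y : T, exists2 k, k <= d & walk_len e x y k) /\
  (exists x y : T, forall k, walk_len e x y k -> d <= k).

From mathcomp Require Import all_boot all_algebra zify.
Import GRing.Theory Num.Theory.
Set Implicit Arguments. Unset Strict Implicit. Unset Printing Implicit Defensive.

(* A vertex is a configuration of units on the positions 0..m+1 of a path: the
   two end positions are buckets counted mod n, the inner ones hold at most one
   unit.  An integer flow f on the m+1 edges of the path carries a configuration
   x to y when every position receives its inflow minus its outflow.  An edge
   of Y is a unit flow, so a walk from v to u yields a flow of cost
   sum_i |f_i| at most its length; conversely a flow of positive cost always
   contains a unit move that is legal at v and lowers the cost, so the distance
   is the least cost of a flow.  The flows from v to u are t + P, where P is a
   1-Lipschitz running difference of the inner coordinates and t ranges over a
   residue class mod n.  Either some t = -P_k is allowed, with cost at most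
   m(m+1)/2 <= n(m+1)/2, or all -P_j lie strictly between two consecutive
   allowed values of t, whose costs add up to n(m+1).  The pair with buckets
   n/2 and 0 and, for odd n, alternating inner bits shows that floor(n(m+1)/2)
   is attained. *)

Lemma big_ord_update2_mod N d (g h : nat -> nat) p q :
  p < N -> q < N -> p != q -> (forall j, j != p -> j != q -> g j = h j) ->
  g p + g q = h p + h q %[mod d] ->
  \sum_(j < N) g j = \sum_(j < N) h j %[mod d].
Proof.
move=> ltpN ltqN neqpq eq_gh eq_pq.
have neq_qp : Ordinal ltqN != Ordinal ltpN by rewrite -(inj_eq val_inj) /= eq_sym.
rewrite (bigD1 (Ordinal ltpN)) // (bigD1 (Ordinal ltqN)) //=.
rewrite [in RHS](bigD1 (Ordinal ltpN)) // [in RHS](bigD1 (Ordinal ltqN)) //=.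
rewrite !addnA -modnDml eq_pq modnDml (eq_bigr (h \o val)) // => j /andP [jp jq].
by apply: eq_gh.
Qed.

Lemma unit_steps_between (a : nat -> int) (lo hi : int) N :
  (forall j, j < N -> `|a j.+1 - a j|%N <= 1) -> (lo < a 0 < hi)%R ->
  (forall j, j <= N -> a j != lo /\ a j != hi) -> forall j, j <= N -> (lo < a j < hi)%R.
Proof.
move=> step start avoid; elim=> [|j IHj] le_jN //.
by have := IHj (ltnW le_jN); have := step j le_jN; have := avoid _ le_jN; lia.
Qed.

(* Pairing the terms j and M - j, each pair contributes at most M. *)
Lemma sum_dist_le M k : k <= M -> 2 * \sum_(j < M.+1) `|j - k| <= M * M.+1.
Proof.
move=> le_kM; rewrite mul2n -addnn [X in _ + X](_ : _ = \sum_(j < M.+1) `|(M - j) - k|).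
  rewrite -big_split /=; apply: (@leq_trans (\sum_(j < M.+1) M)).
    by apply: leq_sum => j _; have := ltn_ord j; lia.
  by rewrite sum_nat_const card_ord mulnC.
rewrite -(big_mkord xpredT (fun j => `|j - k|)) big_rev_mkord subn0.
by apply: eq_bigr => j _; rewrite subSS.
Qed.

Lemma sum_odd_ord N : \sum_(j < N) odd j = N./2.
Proof. by elim: N => [|N IHN]; rewrite ?big_ord0 // big_ord_recr /= IHN; lia. Qed.

Lemma half_mul a b : (a * b) %/ 2 = a./2 * b + odd a * b./2.
Proof.
rewrite divn2 -{1}(odd_double_half a) mulnDl -doubleMl.
case: (odd a); rewrite ?mul1n ?mul0n ?add0n ?addn0 ?doubleK //.
by rewrite halfD odd_double andbF add0n doubleK addnC.
Qed.

Section YokeGraph.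
Variables n m : nat.
Hypothesis n_gt0 : 0 < n.

Local Notation coord v := (ycoord (val v)).

Lemma coord_bucket_lt (v : yvertex n m) j : is_bucket m j -> coord v j < n.
Proof. by case/orP => /eqP ->; rewrite /ycoord //= ltnn. Qed.

Lemma coord_interior_le1 (v : yvertex n m) j : 0 < j <= m -> coord v j <= 1.
Proof.
case: j => // j /= lejm; rewrite /ycoord /= lejm.
by case: insubP => // k _ _; case: (_ k).
Qed.

Lemma coord_sum_mod (v : yvertex n m) : (\sum_(j < m.+2) coord v j) %% n = 0.
Proof. by apply/eqP; case: v. Qed.

Lemma yvertex_of_coords (h : nat -> nat) :
  (forall j, is_bucket m j -> h j < n) -> (forall j, 0 < j <= m -> h j <= 1) ->
  (\sum_(j < m.+2) h j) %% n = 0 ->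
  exists w : yvertex n m, forall j, j <= m.+1 -> coord w j = h j.
Proof.
move=> h_bucket h_interior h_sum.
have h0 : h 0 < n by apply: h_bucket.
have hlast : h m.+1 < n by apply: h_bucket; rewrite /is_bucket eqxx orbT.
pose r : yraw n m := ((Ordinal h0, [ffun k : 'I_m => h k.+1 == 1]), Ordinal hlast).
have coord_r j : j <= m.+1 -> ycoord r j = h j.
  rewrite /ycoord /=; case: j => [|j] //= lejm; case: ltnP => [ltjm | lemj].
    rewrite (insubT (fun k => k < m) ltjm) /= ffunE.
    by have := h_interior j.+1 ltjm; case: (h j.+1) => [|[|]].
  by have -> : j = m by lia.
have valid_r : yvalid r.
  rewrite /yvalid (eq_bigr (fun j : 'I_m.+2 => h j)) ?h_sum // => j _.
  exact/coord_r/leq_ord.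
by exists (exist _ r valid_r) => j /coord_r.
Qed.

Lemma coord_inj (v w : yvertex n m) :
  (forall j, j <= m.+1 -> coord v j = coord w j) -> v = w.
Proof.
move=> eq_vw; apply: val_inj; move: (val v) (val w) eq_vw => [[a x] b] [[a' x'] b'] eq_vw.
have eq0 := eq_vw 0 isT; have eqlast := eq_vw m.+1 (leqnn _).
rewrite /ycoord /= ltnn in eq0 eqlast.
have -> : x = x'.
  apply/ffunP => k; have := eq_vw k.+1 (ltnW (ltn_ord k)).
  by rewrite /ycoord /= ltn_ord valK; case: (x k); case: (x' k).
by rewrite (ord_inj eq0) (ord_inj eqlast).
Qed.

Lemma exists_yvertex_prefix (a : nat) (b : nat -> bool) : a < n ->
  exists w : yvertex n m, coord w 0 = a /\ forall j, 0 < j <= m -> coord w j = b j.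
Proof.
move=> lt_an.
pose h0 j := if j == 0 then a else nat_of_bool (b j).
pose S := \sum_(j < m.+1) h0 j.
pose h j := if j == m.+1 then (n.-1 * S) %% n else h0 j.
have [| j j_interior | | w coord_w] := @yvertex_of_coords h.
- by move=> j /orP [] /eqP ->; rewrite /h //= eqxx ltn_pmod.
- by rewrite /h /h0 ifN ?ifN; [case: (b j) | lia | lia].
- rewrite big_ord_recr /= {2}/h eqxx modnDmr.
  rewrite (eq_bigr (fun j : 'I_m.+1 => h0 j)) => [|j _].
    by rewrite -mulSn prednK // modnMr.
  by rewrite /h ifN //; have := ltn_ord j; lia.
- exists w; split=> [|j j_interior]; first by rewrite coord_w.
  by rewrite coord_w /h /h0 ?ifN //; lia.
Qed.

Definition incr_at j b := if is_bucket m j then (b + 1) %% n else b + 1.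
Definition decr_at j a := if is_bucket m j then (a + n.-1) %% n else a.-1.

Lemma yinc_incr_at j b : yinc n m j (incr_at j b) b.
Proof. by rewrite /yinc /incr_at; case: is_bucket. Qed.

Lemma yinc_decr_at j a : (is_bucket m j -> a < n) -> (~~ is_bucket m j -> 0 < a) ->
  yinc n m j a (decr_at j a).
Proof.
rewrite /yinc /decr_at; case: is_bucket => [lt_an _ | _ /(_ isT) a_gt0].
  by rewrite modnDml -addnA addn1 prednK // modnDr modn_small ?lt_an.
by rewrite addn1 prednK.
Qed.

Lemma incr_at_mod j b : incr_at j b = b.+1 %[mod n].
Proof. by rewrite /incr_at addn1; case: is_bucket; rewrite ?modn_mod. Qed.

Lemma decr_at_mod j a : (~~ is_bucket m j -> 0 < a) -> (decr_at j a).+1 = a %[mod n].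
Proof.
rewrite /decr_at; case: is_bucket => [_ | /(_ isT) a_gt0]; last by rewrite prednK.
by rewrite -addn1 modnDml -addnA addn1 prednK // modnDr.
Qed.

Lemma move_unit (v : yvertex n m) p q : p <= m.+1 -> q <= m.+1 -> p != q ->
  (~~ is_bucket m p -> 0 < coord v p) -> (~~ is_bucket m q -> coord v q = 0) ->
  exists w : yvertex n m,
    [/\ coord w p = decr_at p (coord v p), coord w q = incr_at q (coord v q) &
        forall j, j <= m.+1 -> j != p -> j != q -> coord w j = coord v j].
Proof.
move=> le_p le_q neq_pq src dst.
pose h j := if j == p then decr_at p (coord v p)
            else if j == q then incr_at q (coord v q) else coord v j.
have h_p : h p = decr_at p (coord v p) by rewrite /h eqxx.
have h_q : h q = incr_at q (coord v q) by rewrite /h eqxx ifN // eq_sym.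
have h_other j : j != p -> j != q -> h j = coord v j by move=> jp jq; rewrite /h !ifN.
have [j j_bucket | j j_interior | | w coord_w] := @yvertex_of_coords h.
- rewrite /h; case: ifP => [/eqP eq_jp | _].
    by rewrite /decr_at -eq_jp j_bucket ltn_pmod.
  case: ifP => [/eqP eq_jq | _]; last exact: coord_bucket_lt.
  by rewrite /incr_at -eq_jq j_bucket ltn_pmod.
- have j_inner : ~~ is_bucket m j by rewrite /is_bucket; lia.
  rewrite /h; case: ifP => [/eqP eq_jp | _].
    subst j; rewrite /decr_at (negbTE j_inner).
    by have := coord_interior_le1 v j_interior; lia.
  case: ifP => [/eqP eq_jq | _]; last exact: coord_interior_le1.
  by subst j; rewrite /incr_at (negbTE j_inner) dst.
- rewrite -[RHS](coord_sum_mod v).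
  apply: (@big_ord_update2_mod m.+2 _ _ _ _ _ le_p le_q neq_pq h_other).
  rewrite h_p h_q -modnDmr incr_at_mod modnDmr addnS -addSn.
  by rewrite -modnDml decr_at_mod // modnDml.
- by exists w; split=> [||j j_le jp jq]; rewrite coord_w // ?h_p ?h_q ?h_other.
Qed.

Definition unit_move (x x' : nat -> nat) i : Prop :=
  [/\ forall j, j <= m.+1 -> j != i -> j != i.+1 -> x' j = x j,
      yinc n m i (x i) (x' i) & yinc n m i.+1 (x' i.+1) (x i.+1)].

Lemma yadjP (v w : yvertex n m) : yadj v w <->
  val v != val w /\ exists2 i, i <= m &
    unit_move (coord v) (coord w) i \/ unit_move (coord w) (coord v) i.
Proof.
split.
  case/andP=> neq_vw /existsP [i /andP [/forallP others moves]].
  split=> //; exists i; first exact: leq_ord.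
  have others' j : j <= m.+1 -> j != i -> j != i.+1 -> coord v j = coord w j.
    move=> le_j ji ji1; have /implyP := others (Ordinal (le_j : j < m.+2)).
    by rewrite ji ji1 => /(_ isT) /eqP.
  by case/orP: moves => /andP [inc_i inc_i1]; [left | right]; split=> // j *; rewrite others'.
case=> neq_vw [i le_im moves]; rewrite /yadj neq_vw /=.
apply/existsP; exists (Ordinal (le_im : i < m.+1)); apply/andP; split.
  apply/forallP => j; apply/implyP => /andP [ji ji1].
  by case: moves => -[others _ _]; rewrite others ?leq_ord.
by case: moves => -[_ inc_i inc_i1]; rewrite /= inc_i inc_i1 ?orbT.
Qed.

Lemma eq_or_yadj (v w : yvertex n m) i : i <= m ->
  unit_move (coord v) (coord w) i \/ unit_move (coord w) (coord v) i -> w = v \/ yadj v w.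
Proof.
move=> le_im moves; case: (eqVneq (val v) (val w)) => [/val_inj -> | neq_vw]; first by left.
by right; apply/yadjP; split=> //; exists i.
Qed.

(* [f i] is the net number of units carried from position i to i+1.  The
   last bucket is not constrained: the sum condition determines it. *)
Definition is_flow (x y : nat -> nat) (f : nat -> int) : Prop :=
  (n%:Z %| ((x 0%N)%:Z - f 0%N - (y 0%N)%:Z)%R)%Z /\
  forall j, 0 < j <= m -> ((y j)%:Z = (x j)%:Z + f j.-1 - f j)%R.

Definition unit_flow i : nat -> int := fun j => Posz (j == i).

Definition cost (f : nat -> int) : nat := \sum_(j < m.+1) `|f j|%N.

Lemma is_flow0 x : is_flow x x (fun=> 0%R).
Proof. by split=> [|j _]; [rewrite subr0 subrr dvdz0 | rewrite subr0 addr0]. Qed.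

Lemma is_flowN x y f : is_flow x y f -> is_flow y x (fun j => - f j)%R.
Proof.
case=> [dvd_0 eq_interior]; split=> [|j /eq_interior]; last by lia.
by move: dvd_0; rewrite -rpredN; congr (_ %| _)%Z; lia.
Qed.

Lemma is_flowD x y z f g :
  is_flow x y f -> is_flow y z g -> is_flow x z (fun j => f j + g j)%R.
Proof.
case=> [dvd_f eq_f] [dvd_g eq_g]; split=> [|j j_interior].
  by have := rpredD dvd_f dvd_g; congr (_ %| _)%Z; lia.
by have := eq_f j j_interior; have := eq_g j j_interior; lia.
Qed.

Lemma dvdz_modn_sub a : (n%:Z %| ((a %% n)%:Z - a%:Z)%R)%Z.
Proof.
apply/dvdzP; exists (- (a %/ n)%:Z)%R; rewrite {2}(divn_eq a n).
by move: (a %/ n) (a %% n) => q r; rewrite PoszD PoszM; lia.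
Qed.

Lemma is_flow_unit_move x x' i : unit_move x x' i -> is_flow x x' (unit_flow i).
Proof.
move=> [others inc_i inc_i1]; rewrite /unit_flow.
rewrite /yinc /is_bucket in inc_i inc_i1; split=> [|j j_interior].
  case: (posnP i) => [i0 | i_gt0].
    move: inc_i; rewrite i0 /= => /eqP ->.
    by have := dvdz_modn_sub (x' 0 + 1); congr (_ %| _)%Z; lia.
  have -> : x' 0 = x 0 by apply: others; lia.
  have -> : (0 == i) = false by lia.
  by rewrite subr0 subrr dvdz0.
have [eq_ji | j_ne_i] := eqVneq j i.
  subst j; rewrite (_ : i.-1 == i = false); last by lia.
  by move: inc_i; rewrite ifN; [move/eqP; lia | lia].
have [eq_ji1 | j_ne_i1] := eqVneq j i.+1.
  by subst j; move: inc_i1; rewrite eqxx ifN; [move/eqP; lia | lia].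
rewrite (_ : j.-1 == i = false) ?others //; lia.
Qed.

Lemma cost_update f g i : i <= m -> (forall j, j != i -> g j = f j) ->
  cost g + `|f i|%N = cost f + `|g i|%N.
Proof.
move=> le_im eq_fg; have lt_im : i < m.+1 := le_im.
rewrite /cost (bigD1 (Ordinal lt_im)) // [in RHS](bigD1 (Ordinal lt_im)) //=.
rewrite (eq_bigr (fun j : 'I_m.+1 => `|f j|%N)); first lia.
by move=> j j_ne_i; rewrite eq_fg // -(inj_eq val_inj).
Qed.

Lemma cost_eq0P f : reflect (forall j, j <= m -> f j = 0%R) (cost f == 0).
Proof.
rewrite /cost sum_nat_eq0; apply: (iffP forallP) => [f0 j le_jm | f0 j].
  by move: (f0 (Ordinal (le_jm : j < m.+1))) => /= /eqP; lia.
by rewrite f0 ?leq_ord.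
Qed.

Lemma cost_flowD f g : cost (fun j => f j + g j)%R <= cost f + cost g.
Proof. by rewrite /cost -big_split /= leq_sum // => j _; lia. Qed.

Lemma cost_flowN f : cost (fun j => - f j)%R = cost f.
Proof. by apply: eq_bigr => j _; rewrite abszN. Qed.

Lemma cost_unit_flow i : i <= m -> cost (unit_flow i) = 1.
Proof.
move=> le_im; have := @cost_update (fun=> 0%R) (unit_flow i) i le_im.
have /eqP -> : cost (fun=> 0%R) == 0 by apply/cost_eq0P.
by rewrite /unit_flow eqxx addn0 => -> // j /negbTE ->.
Qed.

Lemma eq_of_dvdz_sub (a b : nat) : a < n -> b < n -> (n%:Z %| (a%:Z - b%:Z)%R)%Z -> a = b.
Proof. by move=> lt_an lt_bn; rewrite -eqz_mod_dvd !modz_small; [move/eqP; lia | lia | lia]. Qed.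

Lemma eq_of_flow_cost0 (v u : yvertex n m) f :
  is_flow (coord v) (coord u) f -> cost f = 0 -> v = u.
Proof.
move=> [dvd_0 eq_interior] /eqP /cost_eq0P f0.
have eq_interior' j : 0 < j <= m -> coord v j = coord u j.
  by move=> j_interior; have := eq_interior j j_interior; rewrite !f0; lia.
have eq_0 : coord v 0 = coord u 0.
  by move: dvd_0; rewrite f0 // subr0; apply: eq_of_dvdz_sub; apply: coord_bucket_lt.
have eq_last : coord v m.+1 = coord u m.+1.
  have := etrans (coord_sum_mod v) (esym (coord_sum_mod u)); rewrite !(big_ord_recr m.+1) /=.
  rewrite (eq_bigr (fun j : 'I_m.+1 => coord u j)) => [|[[|j] lt_j] _] //=; last first.
    by apply: eq_interior'; lia.
  move/eqP; rewrite eqn_modDl => /eqP.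
  by rewrite !modn_small // coord_bucket_lt // /is_bucket eqxx orbT.
apply: coord_inj => j; rewrite leq_eqVlt ltnS => /orP [/eqP -> // | le_jm].
by case: j le_jm => [|j] le_jm //; apply: eq_interior'.
Qed.

Lemma yadj_flow (v w : yvertex n m) :
  yadj v w -> exists2 f, is_flow (coord v) (coord w) f & cost f = 1.
Proof.
case/yadjP => _ [i le_im [move_vw | move_wv]].
  by exists (unit_flow i); [exact: is_flow_unit_move | exact: cost_unit_flow].
exists (fun j => - unit_flow i j)%R; first exact/is_flowN/is_flow_unit_move.
by rewrite cost_flowN cost_unit_flow.
Qed.

Lemma flow_of_path (v : yvertex n m) p : path (@yadj n m) v p ->
  exists2 f, is_flow (coord v) (coord (last v p)) f & cost f <= size p.
Proof.
elim: p v => [|w p IHp] v /=.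
  by exists (fun=> 0%R); [exact: is_flow0 | rewrite leqn0; apply/cost_eq0P].
case/andP => /yadj_flow [g flow_g cost_g] /IHp [f flow_f cost_f].
exists (fun j => g j + f j)%R; first exact: is_flowD flow_g flow_f.
by apply: leq_trans (cost_flowD g f) _; rewrite cost_g.
Qed.

(* Walk left from [j] while positions are empty (the flow cannot decrease
   there), then right while the next position is full. *)
Lemma find_forward_edge (a c : nat -> nat) (f : nat -> int) j :
  (forall k, 0 < k <= m -> a k <= 1 /\ c k <= 1) ->
  (forall k, 0 < k <= m -> ((c k)%:Z = (a k)%:Z + f k.-1 - f k)%R) ->
  j <= m -> (0 < f j)%R ->
  exists2 i, i <= m /\ (0 < f i)%R & (0 < i -> 0 < a i) /\ (i < m -> a i.+1 = 0).
Proof.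
move=> le1 balance.
have sender k : k <= m -> (0 < f k)%R ->
    exists2 i, i <= m /\ (0 < f i)%R & 0 < i -> 0 < a i.
  elim: k => [|k IHk] le_km f_pos; first by exists 0.
  have k_interior : 0 < k.+1 <= m by lia.
  have [a1 | a0] : a k.+1 = 1 \/ a k.+1 = 0 by have := le1 _ k_interior; lia.
    by exists k.+1; rewrite ?a1.
  by apply: IHk; [lia | have := balance _ k_interior; rewrite a0 /=; lia].
move=> le_jm /(sender j le_jm) [i0 [le_i0 f_i0] src_i0].
suff receiver d i : i + d = m -> (0 < f i)%R -> (0 < i -> 0 < a i) ->
    exists2 i, i <= m /\ (0 < f i)%R & (0 < i -> 0 < a i) /\ (i < m -> a i.+1 = 0).
  by apply: (receiver (m - i0) i0); rewrite ?subnKC.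
elim: d i => [|d IHd] i sum_id f_pos src_i.
  by exists i; split=> //; lia.
have i1_interior : 0 < i.+1 <= m by lia.
have [a1 | a0] : a i.+1 = 1 \/ a i.+1 = 0 by have := le1 _ i1_interior; lia.
  apply: (IHd i.+1); [lia | | by rewrite a1].
  by have := balance _ i1_interior; have := le1 _ i1_interior; rewrite a1 /=; lia.
by exists i; split=> //; lia.
Qed.

Lemma find_backward_edge (a c : nat -> nat) (f : nat -> int) j :
  (forall k, 0 < k <= m -> a k <= 1 /\ c k <= 1) ->
  (forall k, 0 < k <= m -> ((c k)%:Z = (a k)%:Z + f k.-1 - f k)%R) ->
  j <= m -> (f j < 0)%R ->
  exists2 i, i <= m /\ (f i < 0)%R & (i < m -> 0 < a i.+1) /\ (0 < i -> a i = 0).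
Proof.
move=> le1 balance le_jm f_neg.
have le1' k : 0 < k <= m -> 1 - a k <= 1 /\ 1 - c k <= 1 by split; apply: leq_subr.
have balance' k : 0 < k <= m ->
    ((1 - c k)%:Z = (1 - a k)%:Z + (- f k.-1) - (- f k))%R.
  by move=> k_interior; have := balance k k_interior; have := le1 k k_interior; lia.
have [|i [le_im f_i] [src dst]] := @find_forward_edge
  (fun k => 1 - a k) (fun k => 1 - c k) (fun k => - f k)%R j le1' balance' le_jm.
  by rewrite oppr_gt0.
by exists i; [split; lia | split=> [/dst | /src]; lia].
Qed.

Lemma forward_neighbor (v : yvertex n m) i : i <= m ->
  (0 < i -> 0 < coord v i) -> (i < m -> coord v i.+1 = 0) ->
  exists2 w, w = v \/ yadj v w & is_flow (coord v) (coord w) (unit_flow i).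
Proof.
move=> le_im src dst; have neq_i : i != i.+1 by lia.
have src' : ~~ is_bucket m i -> 0 < coord v i by rewrite /is_bucket => inner; apply: src; lia.
have dst' : ~~ is_bucket m i.+1 -> coord v i.+1 = 0 by rewrite /is_bucket => inner; apply: dst; lia.
have [w [w_i w_i1 others]] := move_unit (leqW le_im) (le_im : i < m.+1) neq_i src' dst'.
have move_vw : unit_move (coord v) (coord w) i.
  split=> [j le_j ji ji1 | | ]; first exact: others.
    by rewrite w_i; apply: yinc_decr_at src'; apply: coord_bucket_lt.
  by rewrite w_i1 yinc_incr_at.
by exists w; [exact: eq_or_yadj le_im (or_introl move_vw) | exact: is_flow_unit_move].
Qed.

Lemma backward_neighbor (v : yvertex n m) i : i <= m ->
  (i < m -> 0 < coord v i.+1) -> (0 < i -> coord v i = 0) ->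
  exists2 w, w = v \/ yadj v w & is_flow (coord w) (coord v) (unit_flow i).
Proof.
move=> le_im src dst; have neq_i : i.+1 != i by lia.
have src' : ~~ is_bucket m i.+1 -> 0 < coord v i.+1 by rewrite /is_bucket => inner; apply: src; lia.
have dst' : ~~ is_bucket m i -> coord v i = 0 by rewrite /is_bucket => inner; apply: dst; lia.
have [w [w_i1 w_i others]] := move_unit (le_im : i < m.+1) (leqW le_im) neq_i src' dst'.
have move_wv : unit_move (coord w) (coord v) i.
  split=> [j le_j ji ji1 | | ]; first by rewrite others.
    by rewrite w_i yinc_incr_at.
  by rewrite w_i1; apply: yinc_decr_at src'; apply: coord_bucket_lt.
by exists w; [exact: eq_or_yadj le_im (or_intror move_wv) | exact: is_flow_unit_move].
Qed.

Lemma cost_gt0 f : 0 < cost f -> exists2 j, j <= m & f j != 0%R.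
Proof.
rewrite /cost lt0n sum_nat_eq0 negb_forall => /existsP [j].
by rewrite absz_eq0 => f_j; exists j; rewrite ?leq_ord.
Qed.

Lemma cost_unit_step f g i : i <= m -> (forall j, j != i -> g j = f j) ->
  `|f i|%N = (`|g i|%N).+1 -> cost f = (cost g).+1.
Proof. by move=> le_im eq_fg abs_i; have := cost_update le_im eq_fg; lia. Qed.

Lemma flow_descent (v u : yvertex n m) f : is_flow (coord v) (coord u) f -> 0 < cost f ->
  exists w g, [/\ w = v \/ yadj v w, is_flow (coord w) (coord u) g & cost f = (cost g).+1].
Proof.
move=> flow_f /cost_gt0 [j le_jm f_j].
have le1 k : 0 < k <= m -> coord v k <= 1 /\ coord u k <= 1.
  by move=> k_interior; split; apply: coord_interior_le1.
have [f_pos | f_neg | f0] := ltrgtP 0%R (f j); last by rewrite -f0 eqxx in f_j.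
- have [i [le_im f_i] [src dst]] := find_forward_edge le1 flow_f.2 le_jm f_pos.
  have [w vw flow_vw] := forward_neighbor le_im src dst.
  exists w, (fun k => - unit_flow i k + f k)%R; split=> //.
    exact: is_flowD (is_flowN flow_vw) flow_f.
  by apply: cost_unit_step le_im _ _ => [k ki | ]; rewrite /unit_flow ?(negbTE ki) ?eqxx; lia.
- have [i [le_im f_i] [src dst]] := find_backward_edge le1 flow_f.2 le_jm f_neg.
  have [w vw flow_wv] := backward_neighbor le_im src dst.
  exists w, (fun k => unit_flow i k + f k)%R; split=> //; first exact: is_flowD flow_wv flow_f.
  by apply: cost_unit_step le_im _ _ => [k ki | ]; rewrite /unit_flow ?(negbTE ki) ?eqxx; lia.
Qed.

Lemma walk_of_flow (v u : yvertex n m) f : is_flow (coord v) (coord u) f ->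
  exists2 k, k <= cost f & walk_len (@yadj n m) v u k.
Proof.
move: {2}(cost f) (erefl (cost f)) => N; elim: N v f => [|N IHN] v f cost_f flow_f.
  by exists 0 => //; exists [::]; rewrite (eq_of_flow_cost0 flow_f cost_f).
have [|w [g [vw flow_g cost_g]]] := flow_descent flow_f; first by rewrite cost_f.
have [k le_k [p [size_p path_p last_p]]] : exists2 k, k <= cost g & walk_len (@yadj n m) w u k.
  by apply: IHN flow_g; lia.
case: vw => [<- | adj_vw]; first by exists k; [lia | exists p].
by exists k.+1; [lia | exists (w :: p); rewrite /= adj_vw size_p].
Qed.

Section Drift.
Variables x y : nat -> nat.
Hypothesis interior_le1 : forall j, 0 < j <= m -> x j <= 1 /\ y j <= 1.

Definition drift j : int := \sum_(k < j) ((x k.+1)%:Z - (y k.+1)%:Z)%R.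

Lemma drift0 : drift 0 = 0%R.
Proof. exact: big_ord0. Qed.

Lemma driftS j : drift j.+1 = (drift j + (x j.+1)%:Z - (y j.+1)%:Z)%R.
Proof. by rewrite /drift big_ord_recr /= addrA. Qed.

Lemma is_flow_drift t : (n%:Z %| ((x 0)%:Z - t - (y 0)%:Z)%R)%Z ->
  is_flow x y (fun j => t + drift j)%R.
Proof.
move=> dvd_t; split=> [|[|j] //= j_interior]; first by rewrite drift0 addr0.
by rewrite driftS; lia.
Qed.

Lemma drift_step j : j < m -> `|drift j.+1 - drift j|%N <= 1.
Proof.
by move=> lt_jm; have := interior_le1 (_ : 0 < j.+1 <= m); rewrite driftS; lia.
Qed.

Lemma drift_dist j k : j <= m -> k <= m -> `|drift j - drift k|%N <= `|j - k|.
Proof.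
wlog le_kj : j k / k <= j.
  move=> drift_le le_jm le_km; case: (leqP k j) => [le_kj | /ltnW le_jk]; first exact: drift_le.
  by have := drift_le k j le_jk le_km le_jm; lia.
move=> le_jm _; rewrite -(subnKC le_kj) in le_jm *.
elim: (j - k) le_jm => [|d IHd] le_m; first by rewrite addn0 subrr.
by rewrite addnS in le_m *; have := IHd (ltnW le_m); have := drift_step le_m; lia.
Qed.

Lemma exists_cheap_flow : m <= n -> exists2 f, is_flow x y f & 2 * cost f <= n * m.+1.
Proof.
move=> le_mn.
case: (boolP [exists k : 'I_m.+1, n%:Z %| ((x 0)%:Z + drift k - (y 0)%:Z)%R]%Z)
  => [/existsP [k hit] | /existsPn miss].
  have le_km := leq_ord k.
  exists (fun j => - drift k + drift j)%R; first by apply: is_flow_drift; rewrite opprK.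
  apply: (@leq_trans (2 * \sum_(j < m.+1) `|j - k|)).
    rewrite leq_mul2l /cost leq_sum ?orbT // => j _.
    by have := drift_dist (leq_ord j) le_km; lia.
  by apply: leq_trans (sum_dist_le le_km) _; rewrite leq_mul2r le_mn orbT.
have [q [rho [r_eq rho_ge0 rho_lt]]] : exists q rho,
    [/\ ((x 0)%:Z - (y 0)%:Z = q * n%:Z + rho)%R, (0 <= rho)%R & (rho < n%:Z)%R].
  exists (((x 0)%:Z - (y 0)%:Z) %/ n)%Z, (((x 0)%:Z - (y 0)%:Z) %% n)%Z.
  by split; [exact: divz_eq | apply: modz_ge0 | apply: ltz_pmod]; lia.
have avoid j : j <= m -> (- drift j != rho - n%:Z)%R /\ (- drift j != rho)%R.
  move=> le_jm; have /= no_hit := miss (Ordinal (le_jm : j < m.+1)).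
  by split; apply: contraNneq no_hit => eq_j; apply/dvdzP; [exists (q + 1)%R | exists q]; lia.
have inside j : j <= m -> (rho - n%:Z < - drift j < rho)%R.
  apply: (@unit_steps_between (fun j => - drift j)%R _ _ _ _ _ avoid) => [i lt_im |].
    by have := drift_step lt_im; lia.
  by have [_ rho_ne0] := avoid 0 (leq0n m); rewrite drift0 in rho_ne0 *; lia.
have flow_low : is_flow x y (fun j => rho - n%:Z + drift j)%R.
  by apply: is_flow_drift; apply/dvdzP; exists (q + 1)%R; lia.
have flow_high : is_flow x y (fun j => rho + drift j)%R.
  by apply: is_flow_drift; apply/dvdzP; exists q; lia.
have total : cost (fun j => rho - n%:Z + drift j)%R + cost (fun j => rho + drift j)%R = n * m.+1.
  rewrite /cost -big_split (eq_bigr (fun=> n)) => [|j _ /=].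
    by rewrite sum_nat_const card_ord mulnC.
  by have := inside j (leq_ord j); lia.
case: (leqP (cost (fun j => rho - n%:Z + drift j)%R) (cost (fun j => rho + drift j)%R)).
  by exists (fun j => rho - n%:Z + drift j)%R => //; lia.
by exists (fun j => rho + drift j)%R => //; lia.
Qed.

End Drift.

Lemma exists_costly_pair : exists v u : yvertex n m,
  forall f, is_flow (coord v) (coord u) f -> (n * m.+1) %/ 2 <= cost f.
Proof.
have lt_half : n./2 < n by lia.
have [v [v0 v_interior]] := exists_yvertex_prefix (fun j => odd n && odd j) lt_half.
have [u [u0 u_interior]] := exists_yvertex_prefix (fun j => odd n && ~~ odd j) n_gt0.
exists v, u => f [dvd_0 balance]; rewrite half_mul.
have f_shape j : j <= m -> f j = (f 0 + (odd n && odd j : nat)%:Z)%R.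
  elim: j => [|j IHj] le_jm; first by rewrite andbF addr0.
  have := balance j.+1 (_ : 0 < j.+1 <= m).
  rewrite v_interior // u_interior // IHj ?(ltnW le_jm) //=.
  by case: (odd n); case: (odd j) => /=; lia.
have sum_b : \sum_(j < m.+1) (odd n && odd j : nat) = odd n * m.+1./2.
  by case: (odd n) => /=; rewrite ?sum_odd_ord ?mul1n // big1.
have [q q_eq] : exists q : int, ((n./2)%:Z - f 0 = q * n%:Z)%R.
  by move: dvd_0; rewrite v0 u0 subr0 => /dvdzP.
have [f0_ge | f0_le] : (Posz n./2 <= f 0)%R \/ (f 0 <= Posz n./2 - Posz n)%R.
  have [q_le0 | q_ge1] : (q <= 0)%R \/ (1 <= q)%R by lia.
    by left; have := mulr_le0_ge0 q_le0 (ler0n _ n); lia.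
  by right; have := ler_peMl (ler0n _ n) q_ge1; lia.
- have : \sum_(j < m.+1) (n./2 + (odd n && odd j : nat)) <= cost f.
    by apply: leq_sum => j _; rewrite (f_shape j (leq_ord j)); lia.
  by rewrite big_split /= sum_nat_const card_ord sum_b mulnC.
- have : \sum_(j < m.+1) (n./2 + odd n) <= cost f + \sum_(j < m.+1) (odd n && odd j : nat).
    rewrite -big_split /=; apply: leq_sum => j _.
    by rewrite (f_shape j (leq_ord j)); lia.
  by rewrite sum_nat_const card_ord sum_b; case: (odd n) => /=; lia.
Qed.

End YokeGraph.

Theorem theorem5p15 (n m : nat) :
  1 <= n -> m <= n -> is_diameter (@yadj n m) ((n * m.+1) %/ 2).
Proof.
move=> n_gt0 le_mn; split.
- move=> v u.
  have interior_le1 j : 0 < j <= m -> ycoord (val v) j <= 1 /\ ycoord (val u) j <= 1.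
    by move=> j_interior; split; apply: coord_interior_le1.
  have [f flow_f cost_f] := exists_cheap_flow n_gt0 interior_le1 le_mn.
  have [k le_k walk_k] := walk_of_flow n_gt0 flow_f.
  by exists k => //; apply: leq_trans le_k _; rewrite leq_divRL //; lia.
- have [v [u costly]] := exists_costly_pair m n_gt0.
  exists v, u => k [p [size_p path_p last_p]].
  have [f flow_f cost_f] := flow_of_path n_gt0 path_p.
  by rewrite -size_p; apply: leq_trans cost_f; apply: costly; rewrite -last_p.
Qed.
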